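(* Let $n\geq 2$ and let $(A,\cdot,[\cdot,\ldots,\cdot])$ be a simple transposed Poisson $n$-Lie algebra. Then the $n$-Lie algebra $(A,[\cdot,\ldots,\cdot])$ is simple.
   Context: An $n$-Lie algebra is a vector space $L$ with an $n$-linear skew-symmetric bracket satisfying $[[x_1,\ldots,x_n],y_2,\ldots,y_n]=\sum_{i=1}^n[x_1,\ldots,x_{i-1},[x_i,y_2,\ldots,y_n],x_{i+1},\ldots,x_n]$; an ideal is a subspace $I$ with $[I,A,\ldots,A]\subseteq I$, and it is simple if $[A,\ldots,A]\neq 0$ and its only ideals are $0$ and $A$. A transposed Poisson $n$-Lie algebra (over $\mathbb{C}$) is a triple $(A,\cdot,[\cdot,\ldots,\cdot])$ where $(A,\cdot)$ is commutative associative, $(A,[\cdot,\ldots,\cdot])$ is an $n$-Lie algebra, and $n\,h\,[a_1,\ldots,a_n]=\sum_{i=1}^n[a_1,\ldots,h a_i,\ldots,a_n]$ for all $h,a_i\in A$. An ideal of it is a subspace $J$ with $A\cdot J\subseteq J$ and $[J,A,\ldots,A]\subseteq J$; it is simple if $[A,\ldots,A]\neq 0$ and its only ideals are $0$ and $A$. *)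

From HB Require Import structures.
From mathcomp Require Import all_boot all_order all_algebra.
From mathcomp Require Import complex.
From mathcomp Require Import Rstruct.
From Stdlib Require Import Reals.
Set Implicit Arguments. Unset Strict Implicit. Unset Printing Implicit Defensive.
Import GRing.Theory.
Local Open Scope ring_scope.

Definition CC : fieldType := complex R.

Section NLie.
Variables (K : fieldType) (A : lmodType K) (n : nat).

Definition upd (a : 'I_n -> A) (i : 'I_n) (v : A) : 'I_n -> A :=
  fun j => if j == i then v else a j.

Definition swap (a : 'I_n -> A) (i k : 'I_n) : 'I_n -> A :=
  fun j => if j == i then a k else if j == k then a i else a j.

Definition multilinear (br : ('I_n -> A) -> A) : Prop :=
  forall (a : 'I_n -> A) (i : 'I_n) (c : K) (x y : A),
    br (upd a i (c *: x + y)) = c *: br (upd a i x) + br (upd a i y).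

Definition skew_symmetric (br : ('I_n -> A) -> A) : Prop :=
  forall (a : 'I_n -> A) (i k : 'I_n), i != k -> br (swap a i k) = - br a.

(* Filippov identity:
   [[x_1..x_n], y_2..y_n] = sum_i [x_1,..,[x_i,y_2..y_n],..,x_n];
   the y's are the entries of y : 'I_n -> A other than the first slot k0. *)
Definition filippov (br : ('I_n -> A) -> A) : Prop :=
  forall (x y : 'I_n -> A) (k0 : 'I_n), nat_of_ord k0 = 0%N ->
    br (upd y k0 (br x)) =
    \sum_(i < n) br (upd x i (br (upd y k0 (x i)))).

Definition is_nLie (br : ('I_n -> A) -> A) : Prop :=
  [/\ multilinear br, skew_symmetric br & filippov br].

Definition subspace (I : A -> Prop) : Prop :=
  [/\ I 0, (forall x y, I x -> I y -> I (x + y)) & (forall (c : K) x, I x -> I (c *: x))].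

Definition bracket_closed (br : ('I_n -> A) -> A) (I : A -> Prop) : Prop :=
  forall (a : 'I_n -> A) (k0 : 'I_n), nat_of_ord k0 = 0%N -> I (a k0) -> I (br a).

Definition nLie_ideal (br : ('I_n -> A) -> A) (I : A -> Prop) : Prop :=
  subspace I /\ bracket_closed br I.

Definition nontrivial_bracket (br : ('I_n -> A) -> A) : Prop :=
  exists a : 'I_n -> A, br a != 0.

Definition only_trivial_ideals (P : (A -> Prop) -> Prop) : Prop :=
  forall I, P I -> (forall x, I x -> x = 0) \/ (forall x, I x).

Definition simple_nLie (br : ('I_n -> A) -> A) : Prop :=
  is_nLie br /\ nontrivial_bracket br /\ only_trivial_ideals (nLie_ideal br).

Definition comm_assoc_product (mul : A -> A -> A) : Prop :=
  [/\ (forall (c : K) x y z, mul (c *: x + y) z = c *: mul x z + mul y z),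
      (forall x y, mul x y = mul y x) &
      (forall x y z, mul (mul x y) z = mul x (mul y z))].

Definition transposed_compat (mul : A -> A -> A) (br : ('I_n -> A) -> A) : Prop :=
  forall (h : A) (a : 'I_n -> A),
    n%:R *: mul h (br a) = \sum_(i < n) br (upd a i (mul h (a i))).

Definition is_TPnLie (mul : A -> A -> A) (br : ('I_n -> A) -> A) : Prop :=
  [/\ comm_assoc_product mul, is_nLie br & transposed_compat mul br].

Definition TP_ideal (mul : A -> A -> A) (br : ('I_n -> A) -> A) (J : A -> Prop) : Prop :=
  [/\ subspace J, (forall h x, J x -> J (mul h x)) & bracket_closed br J].

Definition simple_TPnLie (mul : A -> A -> A) (br : ('I_n -> A) -> A) : Prop :=
  is_TPnLie mul br /\ nontrivial_bracket br /\ only_trivial_ideals (TP_ideal mul br).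

End NLie.

From mathcomp Require Import all_boot all_order all_algebra complex Rstruct.
From Stdlib Require Import FunctionalExtensionality.
Set Implicit Arguments. Unset Strict Implicit. Unset Printing Implicit Defensive.
Import GRing.Theory Num.Theory.
Local Open Scope ring_scope.

(* As n is invertible, the span of all brackets is a nonzero ideal of the
   transposed Poisson algebra, so A is perfect: A = [A, ..., A].
   Let I be an n-Lie ideal and x in I.  The defect
     D_{x,y}(z) = n x[z, y_2, ..., y_n] - [x z, y_2, ..., y_n]
   is, by the compatibility identity, the sum of the inner derivations
   [-, y_2, ..., x y_k, ..., y_n], hence a derivation.  Expanding (n - 1) D_{x,y}[b]
   twice with the compatibility identity shows that D_{x,y}[b] is a sum of
   terms lying in I, so D_{x,y}(A) is in I by perfectness.  Summing the defects
   over the slots of a bracket gives n (1 - n) x[b] in I, so A x is in I, again by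
   perfectness: every n-Lie ideal is an ideal of the transposed Poisson
   algebra, and simplicity transfers. *)

Section Subspace.
Variables (K : fieldType) (V : lmodType K) (S : V -> Prop).
Hypothesis S_subspace : subspace S.

Lemma subspace0 : S 0.
Proof. by case: S_subspace. Qed.

Lemma subspaceD x y : S x -> S y -> S (x + y).
Proof. by case: S_subspace => _ + _; apply. Qed.

Lemma subspaceZ c x : S x -> S (c *: x).
Proof. by case: S_subspace => _ _; apply. Qed.

Lemma subspaceN x : S x -> S (- x).
Proof. by rewrite -scaleN1r; apply: subspaceZ. Qed.

Lemma subspaceB x y : S x -> S y -> S (x - y).
Proof. by move=> Sx Sy; apply: subspaceD Sx (subspaceN Sy). Qed.

Lemma subspace_sum (J : Type) (r : seq J) (P : pred J) (F : J -> V) :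
  (forall j, P j -> S (F j)) -> S (\sum_(j <- r | P j) F j).
Proof. exact: (big_ind S subspace0 subspaceD). Qed.

Lemma subspaceZ_inv c x : c != 0 -> S (c *: x) -> S x.
Proof. by move=> c_neq0 /(subspaceZ c^-1); rewrite scalerA mulVf ?scale1r. Qed.

End Subspace.

Section LinearMap.
Variables (K : fieldType) (U V : lmodType K) (f : U -> V).
Hypothesis f_linear : linear f.

Lemma linD x y : f (x + y) = f x + f y.
Proof. by rewrite -[x in LHS]scale1r f_linear scale1r. Qed.

Lemma lin0 : f 0 = 0.
Proof. by apply: (@addrI _ (f 0)); rewrite -linD !addr0. Qed.

Lemma linZ c x : f (c *: x) = c *: f x.
Proof. by rewrite -[c *: x]addr0 f_linear lin0 addr0. Qed.

Lemma linN x : f (- x) = - f x.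
Proof. by rewrite -scaleN1r linZ scaleN1r. Qed.

Lemma linB x y : f (x - y) = f x - f y.
Proof. by rewrite linD linN. Qed.

Lemma lin_sum (J : Type) (r : seq J) (P : pred J) (F : J -> U) :
  f (\sum_(j <- r | P j) F j) = \sum_(j <- r | P j) f (F j).
Proof. exact: (big_morph f linD lin0). Qed.

Lemma subspace_preim (S : V -> Prop) : subspace S -> subspace (fun u => S (f u)).
Proof.
move=> S_subspace; split=> [|x y Sx Sy|c x Sx]; rewrite ?lin0 ?linD ?linZ.
- exact: subspace0.
- exact: subspaceD.
- exact: subspaceZ.
Qed.

End LinearMap.

Section Update.
Variables (K : fieldType) (A : lmodType K) (n : nat).
Implicit Types (a : 'I_n -> A) (i j k : 'I_n).

Lemma upd_same a i v : upd a i v i = v.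
Proof. by rewrite /upd eqxx. Qed.

Lemma upd_other a i j v : j != i -> upd a i v j = a j.
Proof. by rewrite /upd => /negbTE ->. Qed.

Lemma upd_upd a i u v : upd (upd a i u) i v = upd a i v.
Proof. by apply: functional_extensionality => j; rewrite /upd; case: (j == i). Qed.

Lemma upd_id a i : upd a i (a i) = a.
Proof. by apply: functional_extensionality => j; rewrite /upd; case: eqP => [->|]. Qed.

Lemma upd_comm a i j u v : i != j -> upd (upd a i u) j v = upd (upd a j v) i u.
Proof.
move=> neq_ij; apply: functional_extensionality => k; rewrite /upd.
have [->|_] := eqVneq k j; first by rewrite eq_sym (negbTE neq_ij).
by case: (eqVneq k i).
Qed.

Lemma swap_upd a i k v : i != k -> swap (upd a i v) k i = upd (swap a k i) k v.
Proof.
move=> neq_ik; apply: functional_extensionality => j; rewrite /swap /upd.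
by repeat (case: eqP => //= ?; subst); rewrite ?eqxx in neq_ik.
Qed.

Lemma multilinear_upd (br : ('I_n -> A) -> A) a i :
  multilinear br -> linear (fun v => br (upd a i v)).
Proof. by move=> br_multilinear c x y; apply: br_multilinear. Qed.

End Update.

Section Perfect.
Variables (K : fieldType) (A : lmodType K) (n : nat) (br : ('I_n -> A) -> A).

Definition bracket_span (z : A) : Prop :=
  forall S, subspace S -> (forall a, S (br a)) -> S z.

Definition perfect : Prop := forall z, bracket_span z.

Lemma bracket_span_subspace : subspace bracket_span.
Proof.
split=> [S S_subspace _|x y hx hy S S_subspace hS|c x hx S S_subspace hS].
- exact: subspace0.
- exact: subspaceD (hx S S_subspace hS) (hy S S_subspace hS).
- exact: subspaceZ (hx S S_subspace hS).
Qed.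

Lemma bracket_span_br a : bracket_span (br a).
Proof. by move=> S _; apply. Qed.

End Perfect.

Section TransposedPoisson.
Variables (K : fieldType) (A : lmodType K) (n : nat).
Variables (mul : A -> A -> A) (br : ('I_n -> A) -> A).
Hypothesis mul_ca : comm_assoc_product mul.

Lemma mulmC x y : mul x y = mul y x.
Proof. by case: mul_ca. Qed.

Lemma mul_linear x : linear (mul x).
Proof. by case: mul_ca => mulDl _ _ c u v; rewrite !(mulmC x). Qed.

Hypothesis compat : transposed_compat mul br.
Hypothesis n_neq0 : n%:R != 0 :> K.

Lemma bracket_span_TP_ideal : TP_ideal mul br (bracket_span br).
Proof.
split=> [||a k _ _]; [exact: bracket_span_subspace| |exact: bracket_span_br].
move=> h x hx S S_subspace hS.
apply: (hx _ (subspace_preim (mul_linear h) S_subspace)) => a.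
apply: (subspaceZ_inv S_subspace n_neq0); rewrite compat.
by apply: subspace_sum => // i _; apply: hS.
Qed.

Lemma simple_TPnLie_perfect : simple_TPnLie mul br -> perfect br.
Proof.
case=> _ [[a br_a_neq0] TP_simple] z.
have [span0|//] := TP_simple _ bracket_span_TP_ideal.
by rewrite (span0 _ (bracket_span_br a)) eqxx in br_a_neq0.
Qed.

End TransposedPoisson.

Section NLieIdeal.
Variables (K : fieldType) (A : lmodType K) (n : nat).
Variables (mul : A -> A -> A) (br : ('I_n -> A) -> A) (I : A -> Prop).
Hypotheses (br_multilinear : multilinear br) (br_skew : skew_symmetric br).
Hypotheses (br_filippov : filippov br) (mul_ca : comm_assoc_product mul).
Hypotheses (compat : transposed_compat mul br) (I_ideal : nLie_ideal br I).
Hypothesis n_neq0 : n%:R != 0 :> K.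

Local Notation nn := (n%:R : K).
Local Notation br_upd_linear a i := (multilinear_upd a i br_multilinear).

Let I_subspace : subspace I := proj1 I_ideal.

Let n_gt0 : (0 < n)%N.
Proof. by rewrite lt0n; apply: contraNneq n_neq0 => ->. Qed.

Let k0 : 'I_n := Ordinal n_gt0.

Let ideal_br_mem0 a : I (a k0) -> I (br a) := proj2 I_ideal a k0 erefl.

(* [ad y z] is [z, y_2, ..., y_n]: the first entry of [y] is ignored. *)
Definition ad (y : 'I_n -> A) (z : A) : A := br (upd y k0 z).

Definition defect x y z : A := nn *: mul x (ad y z) - ad y (mul x z).

Lemma ideal_br_mem a i : I (a i) -> I (br a).
Proof.
have [->|neq_ik0 hai] := eqVneq i k0; first exact: ideal_br_mem0.
rewrite -[br a]opprK -(br_skew a (i := k0) (k := i)); last by rewrite eq_sym.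
by apply/(subspaceN I_subspace)/ideal_br_mem0; rewrite /swap eqxx.
Qed.

Lemma ad_br y b : ad y (br b) = \sum_i br (upd b i (ad y (b i))).
Proof. exact: br_filippov. Qed.

Lemma defectE x y z : defect x y z = \sum_(k | k != k0) ad (upd y k (mul x (y k))) z.
Proof.
rewrite /defect /ad compat (bigD1 k0) //= upd_same upd_upd addrAC subrr add0r.
by apply: eq_bigr => k neq_kk0; rewrite upd_other // upd_comm // eq_sym.
Qed.

Lemma defect_linear x y : linear (defect x y).
Proof.
move=> c u v; rewrite !defectE scaler_sumr -big_split /=.
by apply: eq_bigr => k _; apply: (br_upd_linear _ k0).
Qed.

Lemma defect_mem_r h y x : I x -> I (defect h y x).
Proof.
move=> Ix; rewrite defectE; apply: subspace_sum => // k _.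
by apply: (ideal_br_mem (i := k0)); rewrite upd_same.
Qed.

Lemma defect_br x y b : defect x y (br b) = \sum_i br (upd b i (defect x y (b i))).
Proof.
rewrite defectE; under eq_bigr => k _ do rewrite ad_br.
rewrite exchange_big /=; apply: eq_bigr => i _.
by rewrite defectE (lin_sum (br_upd_linear b i)).
Qed.

(* The mixed terms shared by the expansions of [n x ad_y [b]] and
   [n ad_y (x [b])]; all other terms of [(n - 1) D_{x,y} [b]] cancel. *)
Definition cross x y b : A :=
  \sum_i \sum_(j | j != i) br (upd (upd b i (mul x (b i))) j (ad y (b j))).

Lemma ad_mul_br x y b :
  nn *: ad y (mul x (br b)) = \sum_i br (upd b i (ad y (mul x (b i)))) + cross x y b.
Proof.
rewrite -(linZ (br_upd_linear y k0)) compat (lin_sum (br_upd_linear y k0)).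
rewrite -big_split; apply: eq_bigr => i _ /=.
rewrite -/(ad _ _) ad_br (bigD1 i) //= upd_same upd_upd.
by congr (_ + _); apply: eq_bigr => j neq_ji; rewrite upd_other.
Qed.

Lemma mul_ad_br x y b :
  nn *: mul x (ad y (br b)) = \sum_i br (upd b i (mul x (ad y (b i)))) + cross x y b.
Proof.
rewrite ad_br (lin_sum (mul_linear mul_ca x)) scaler_sumr.
transitivity (\sum_j (br (upd b j (mul x (ad y (b j))))
    + \sum_(i | i != j) br (upd (upd b i (mul x (b i))) j (ad y (b j))))).
  apply: eq_bigr => j _; rewrite compat (bigD1 j) //= upd_same upd_upd.
  by congr (_ + _); apply: eq_bigr => i neq_ij; rewrite upd_other // upd_comm // eq_sym.
rewrite big_split /=; congr (_ + _).
rewrite /cross (exchange_big_dep xpredT) //=.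
by apply: eq_bigr => i _; apply: eq_bigl => j; rewrite eq_sym.
Qed.

Lemma defect_br_cross x y b : (nn - 1) *: defect x y (br b) = (nn - 1) *: cross x y b.
Proof.
have defect_brE : defect x y (br b) = nn *: \sum_i br (upd b i (mul x (ad y (b i))))
                                 - \sum_i br (upd b i (ad y (mul x (b i)))).
  rewrite defect_br scaler_sumr -sumrB; apply: eq_bigr => i _.
  by rewrite (linB (br_upd_linear b i)) (linZ (br_upd_linear b i)).
rewrite scalerBl scale1r {2}defect_brE /defect scalerBr mul_ad_br ad_mul_br.
set Q := \sum_i _; set P := \sum_i _.
by rewrite scalerDr scalerBl scale1r opprB addrC !addrA subrK opprD addrA (addrAC P) subrr add0r.
Qed.

Lemma cross_mem x y b : I x -> I (cross x y b).
Proof.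
move=> Ix; set w := nn *: (nn *: mul (ad y x) (br b)).
have I_wP : I (w - \sum_i br (upd b i (ad y (mul x (b i))))).
  rewrite /w compat scaler_sumr -sumrB; apply: subspace_sum => // i _.
  rewrite -(linZ (br_upd_linear b i)) -(linB (br_upd_linear b i)).
  apply: (ideal_br_mem (i := i)); rewrite upd_same.
  by rewrite (mulmC mul_ca (ad y x)) (mulmC mul_ca x); apply: defect_mem_r.
have I_wad : I (w - nn *: ad y (mul x (br b))).
  rewrite -scalerBr; apply: subspaceZ => //.
  by rewrite (mulmC mul_ca (ad y x)) (mulmC mul_ca x); apply: defect_mem_r.
have := subspaceB I_subspace I_wP I_wad.
by rewrite ad_mul_br opprB addrC addrA subrK addrC addKr.
Qed.

Hypotheses (n1_neq0 : nn - 1 != 0) (br_perfect : perfect br).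

Lemma defect_mem x y z : I x -> I (defect x y z).
Proof.
move=> Ix; apply: (br_perfect z (subspace_preim (defect_linear x y) I_subspace)) => b.
by rewrite (scalerI n1_neq0 (defect_br_cross x y b)); apply: cross_mem.
Qed.

Lemma ad_swap b i v : i != k0 -> ad (swap b k0 i) v = - br (upd b i v).
Proof. by move=> neq_ik0; rewrite /ad -swap_upd // br_skew ?opprK // eq_sym. Qed.

Lemma mul_slot_mem x b i : I x -> I (br (upd b i (mul x (b i))) - nn *: mul x (br b)).
Proof.
move=> Ix; have [->|neq_ik0] := eqVneq i k0.
  have -> : br b = ad b (b k0) by rewrite /ad upd_id.
  by rewrite -opprB; apply: (subspaceN I_subspace); apply: defect_mem.
have -> : br b = - ad (swap b k0 i) (b i) by rewrite ad_swap // upd_id opprK.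
rewrite -[br (upd b i _)]opprK -ad_swap // (linN (mul_linear mul_ca x)) scalerN opprK addrC.
exact: defect_mem.
Qed.

Lemma mul_br_mem x b : I x -> I (mul x (br b)).
Proof.
move=> Ix.
have : I (\sum_i (br (upd b i (mul x (b i))) - nn *: mul x (br b))).
  by apply: subspace_sum => // i _; apply: mul_slot_mem.
rewrite sumrB -compat sumr_const card_ord -scaler_nat scalerA -scalerBl.
apply: subspaceZ_inv => //.
by rewrite -{1}[nn]mulr1 -mulrBr mulf_neq0 // -opprB oppr_eq0.
Qed.

Lemma nLie_ideal_mul_mem x z : I x -> I (mul z x).
Proof.
move=> Ix; rewrite mulmC //.
apply: (br_perfect z (subspace_preim (mul_linear mul_ca x) I_subspace)) => b.
exact: mul_br_mem.
Qed.

Lemma nLie_ideal_TP_ideal : TP_ideal mul br I.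
Proof.
split; [exact: I_subspace| |exact: (proj2 I_ideal)].
by move=> h x; apply: nLie_ideal_mul_mem.
Qed.

End NLieIdeal.

Lemma natrCC_eq0 m : ((m%:R : CC) == 0) = (m == 0)%N.
Proof. exact: (@pnatr_eq0 (complex Rdefinitions.R)). Qed.

Theorem mainTheorem6 (n : nat) (hn : (2 <= n)%N) (A : lmodType CC)
  (mul : A -> A -> A) (br : ('I_n -> A) -> A) :
  simple_TPnLie mul br -> simple_nLie br.
Proof.
move=> TP_simple; have [[mul_ca br_nLie compat] [br_nontriv TP_ideals]] := TP_simple.
have [br_multilinear br_skew br_filippov] := br_nLie.
have n_neq0 : n%:R != 0 :> CC by rewrite natrCC_eq0 -lt0n ltnW.
have n1_neq0 : n%:R - 1 != 0 :> CC by rewrite -[1]/(1%:R) -natrB ?natrCC_eq0 ?subn_eq0 -?ltnNge // ltnW.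
have br_perfect := simple_TPnLie_perfect mul_ca compat n_neq0 TP_simple.
split=> //; split=> // I I_ideal; apply: TP_ideals.
exact: nLie_ideal_TP_ideal.
Qed.
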